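(* In the MUPIR setting with $S = N+U-1$ sources and $K$ messages, for every integer $S \ge 1$ and every $\theta\in[K]$, the message $W_\theta$ can be retrieved while maintaining privacy from all $S$ sources, and the rate $R$ of such private retrieval satisfies $$R \le \Big(1 + \frac{1}{S} + \cdots + \frac{1}{S^{K-1}}\Big)^{-1}.$$
   Context: Setting (MUPIR): $N$ replicated, non-communicating databases each store the same $K$ independent messages $W_1,\dots,W_K$ of $L$ bits each ($H(W_k)=L$). A central user wishes to retrieve $W_\theta$ with help of $U-1$ other users; the $S=N+U-1$ sources are the $N$ databases and the $U-1$ other users. The central user sends a query $Q^{[\theta]}_s$ to each source $s\in[S]$ and receives an answer $A^{[\theta]}_s$ (queries to users are forwarded by them to a database and the answer is relayed back). Queries are independent of messages: $I(Q^{[k]}_{1:S};W_{1:K})=0$ for all $k$. Privacy: for every source $s$ and every $k\in[K]$, $(Q^{[1]}_s,A^{[1]}_s,W_{1:K})$ and $(Q^{[k]}_s,A^{[k]}_s,W_{1:K})$ are identically distributed. Correctness: $W_\theta$ is recoverable from all answers and queries. The rate is $R=L/D=H(W_\theta)/\big(S\,H(A^{[\theta]}_1\mid Q^{[\theta]}_{1:S})\big)$, with $D$ the total number of downloaded bits. *)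

From HB Require Import structures.
From mathcomp Require Import all_boot all_order all_algebra.
From mathcomp Require Import all_classical all_reals exp.
Set Implicit Arguments. Unset Strict Implicit. Unset Printing Implicit Defensive.
Import Order.TTheory GRing.Theory Num.Theory.
Local Open Scope ring_scope.

Section InfoTheory.
Variables (R : realType) (Omega : finType).

Definition is_prob (P : Omega -> R) : Prop :=
  (forall w, 0 <= P w) /\ \sum_(w : Omega) P w = 1.

Definition pr (P : Omega -> R) (A : finType) (X : Omega -> A) (a : A) : R :=
  \sum_(w : Omega | X w == a) P w.

Definition log2 (x : R) : R := ln x / ln 2.

Definition entropy (P : Omega -> R) (A : finType) (X : Omega -> A) : R :=
  - \sum_(a : A | 0 < pr P X a) pr P X a * log2 (pr P X a).

Definition cond_entropy (P : Omega -> R) (A B : finType)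
  (X : Omega -> A) (Y : Omega -> B) : R :=
  entropy P (fun w => (X w, Y w)) - entropy P Y.

Definition mutual_info (P : Omega -> R) (A B : finType)
  (X : Omega -> A) (Y : Omega -> B) : R :=
  entropy P X + entropy P Y - entropy P (fun w => (X w, Y w)).

Definition same_dist (P : Omega -> R) (A : finType) (X Y : Omega -> A) : Prop :=
  forall a, pr P X a = pr P Y a.

End InfoTheory.

Definition messages_ok (R : realType) (Omega : finType) (P : Omega -> R)
  (K L : nat) (W : Omega -> {ffun 'I_K -> L.-tuple bool}) : Prop :=
  is_prob P /\
  (forall k : 'I_K, entropy P (fun w => W w k) = L%:R) /\
  (forall m : {ffun 'I_K -> L.-tuple bool},
     pr P W m = \prod_(k < K) pr P (fun w => W w k) (m k)).

(* A MUPIR scheme with S sources: for each desired index k and source s,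
   a query Q k w s and an answer A k w s. *)
Definition mupir_scheme (R : realType) (Omega : finType) (P : Omega -> R)
  (K L S : nat) (W : Omega -> {ffun 'I_K -> L.-tuple bool})
  (QT AT : finType)
  (Q : 'I_K -> Omega -> {ffun 'I_S -> QT})
  (A : 'I_K -> Omega -> {ffun 'I_S -> AT}) : Prop :=
  (* answers are generated (by a database, possibly relayed by a user)
     from the query sent to that source and the stored messages *)
  (exists ans : 'I_S -> QT -> {ffun 'I_K -> L.-tuple bool} -> AT,
     forall k w s, A k w s = ans s (Q k w s) (W w)) /\
  (forall k, mutual_info P (Q k) W = 0) /\
  (* privacy against every single source *)
  (forall (s : 'I_S) (k k' : 'I_K),
     same_dist P (fun w => (Q k w s, A k w s, W w))
                 (fun w => (Q k' w s, A k' w s, W w))) /\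
  (forall k : 'I_K,
     cond_entropy P (fun w => W w k) (fun w => (A k w, Q k w)) = 0).

(* rate L / D for desired message theta, D = total downloaded bits
   = sum over sources of H(A_s | Q_{1:S}) *)
Definition mupir_rate (R : realType) (Omega : finType) (P : Omega -> R)
  (K L S : nat) (QT AT : finType)
  (Q : 'I_K -> Omega -> {ffun 'I_S -> QT})
  (A : 'I_K -> Omega -> {ffun 'I_S -> AT}) (theta : 'I_K) : R :=
  L%:R / \sum_(s < S) cond_entropy P (fun w => A theta w s) (Q theta).

(* Write F(k, J) := H(A^[k] | W_J, Q^[k]) for the uncertainty left in
   the answers for message k once the messages in J are known.  Correctness, the
   independence of the messages and the independence of queries and messages give
   F(k, J) >= L + F(k, J ∪ {k}) for k outside J.  Privacy, together with the fact that
   each answer is computed from its own query and the messages only, gives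
   F(k', J) <= S F(k, J) for all k, k'.  Adding the messages one at a time yields
   D >= F(theta, ∅) >= L (1 + 1/S + ... + 1/S^(K-1)).
   Achievability is trivial: every source returns all the messages. *)

From HB Require Import structures.
From mathcomp Require Import all_boot all_order all_algebra.
From mathcomp Require Import all_classical all_reals exp.
From mathcomp Require Import lra zify.
Import Order.TTheory GRing.Theory Num.Theory.
Local Open Scope ring_scope.
Set Implicit Arguments. Unset Strict Implicit. Unset Printing Implicit Defensive.

Section Entropy.
Variables (R : realType) (Omega : finType) (P : Omega -> R).
Hypothesis P_prob : is_prob P.
Implicit Types (A B C : finType).

Definition determines A B (X : Omega -> A) (Y : Omega -> B) : Prop :=
  forall w w', X w = X w' -> Y w = Y w'.

Lemma P_ge0 w : 0 <= P w. Proof. exact: P_prob.1. Qed.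

Lemma P_gt0 w : P w != 0 -> 0 < P w.
Proof. by rewrite lt_def P_ge0 andbT. Qed.

Lemma sum_pr_mul A (X : Omega -> A) (h : A -> R) :
  \sum_a pr P X a * h a = \sum_w P w * h (X w).
Proof.
rewrite (partition_big X predT) //=; apply: eq_bigr => a _.
by rewrite /pr mulr_suml; apply: eq_bigr => w /eqP ->.
Qed.

Lemma pr_comp A B (X : Omega -> A) (g : A -> B) b :
  pr P (g \o X) b = \sum_(a | g a == b) pr P X a.
Proof.
rewrite /pr (partition_big X (fun a => g a == b)) //=.
apply: eq_bigr => a /eqP gab; apply: eq_bigl => w.
by case: (eqVneq (X w) a) => [->|]; rewrite ?gab ?eqxx ?andbF.
Qed.

Lemma sum_pr_pair A C (X : Omega -> A) (Z : Omega -> C) c :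
  \sum_a pr P (fun w => (X w, Z w)) (a, c) = pr P Z c.
Proof.
rewrite -[Z]/(snd \o (fun w => (X w, Z w))) pr_comp.
transitivity (\sum_a \sum_(c' | c' == c) pr P (fun w => (X w, Z w)) (a, c')).
  by apply: eq_bigr => a _; rewrite big_pred1_eq.
by rewrite pair_big_dep; apply: eq_big => -[].
Qed.

Lemma sum_pr A (X : Omega -> A) : \sum_a pr P X a = 1.
Proof.
rewrite -P_prob.2; under eq_bigr do rewrite -[pr _ _ _]mulr1.
by rewrite (sum_pr_mul X (fun=> 1)); under eq_bigr do rewrite mulr1.
Qed.

Lemma pr_ge0 A (X : Omega -> A) a : 0 <= pr P X a.
Proof. by apply: sumr_ge0 => w _; exact: P_ge0. Qed.

Lemma pr_gt0 A (X : Omega -> A) w : 0 < P w -> 0 < pr P X (X w).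
Proof.
move=> Pw_gt0; apply: lt_le_trans Pw_gt0 _.
by rewrite /pr (bigD1 w) //= lerDl; apply: sumr_ge0 => ? _; exact: P_ge0.
Qed.

Lemma ln2_gt0 : 0 < ln (2 : R).
Proof. by apply: ln_gt0; rewrite ltr1n. Qed.

Lemma entropyE A (X : Omega -> A) :
  entropy P X = - (\sum_w P w * ln (pr P X (X w))) / ln 2.
Proof.
rewrite -(sum_pr_mul X (fun a => ln (pr P X a))) /entropy mulNr mulr_suml.
rewrite big_mkcond /=; congr (- _).
apply: eq_bigr => a _; rewrite /log2 mulrA; case: ifP => // /negbT.
by rewrite lt_def negb_and pr_ge0 orbF negbK => /eqP ->; rewrite !mul0r.
Qed.

Lemma entropy_cst A (c : A) : entropy P (fun=> c) = 0.
Proof.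
rewrite entropyE big1 ?oppr0 ?mul0r // => w _.
have -> : pr P (fun=> c) c = 1 by rewrite -P_prob.2 /pr; apply: eq_bigl => ?; rewrite eqxx.
by rewrite ln1 mulr0.
Qed.

Lemma le_entropy A B (X : Omega -> A) (Y : Omega -> B) :
  determines X Y -> entropy P Y <= entropy P X.
Proof.
move=> XY; rewrite !entropyE !mulNr lerN2 ler_pM2r ?invr_gt0 ?ln2_gt0 //.
apply: ler_sum => w _.
have [->|/P_gt0 Pw_gt0] := eqVneq (P w) 0; first by rewrite !mul0r.
apply: ler_wpM2l; first exact: ltW.
rewrite ler_ln ?posrE ?pr_gt0 // /pr big_mkcond [leRHS]big_mkcond /=.
apply: ler_sum => w' _.
have [/XY->|_] := eqVneq (X w') (X w); first by rewrite !eqxx.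
by case: ifP; rewrite ?P_ge0.
Qed.

Lemma entropy_eq A B (X : Omega -> A) (Y : Omega -> B) :
  determines X Y -> determines Y X -> entropy P X = entropy P Y.
Proof. by move=> XY YX; apply/le_anti; rewrite !le_entropy. Qed.

Lemma entropy_same_dist A B (X Y : Omega -> A) (g : A -> B) :
  same_dist P X Y -> entropy P (g \o X) = entropy P (g \o Y).
Proof.
move=> XY.
have prXY b : pr P (g \o X) b = pr P (g \o Y) b.
  by rewrite !pr_comp; apply: eq_bigr => a _; rewrite XY.
by rewrite /entropy; congr (- _); apply: eq_big => b; rewrite prXY.
Qed.

Lemma ln_le_subr1 (x : R) : 0 < x -> ln x <= x - 1.
Proof.
by move=> x_gt0; have := @le_ln1Dx R (x - 1); rewrite addrCA subrr addr0; apply; lra.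
Qed.

(* ln is unspecified on nonpositive reals, whence the positivity of g on the support. *)
Lemma gibbs_ineq A (V : Omega -> A) (g : A -> R) :
  (forall a, 0 <= g a) -> \sum_a g a <= 1 -> (forall w, 0 < P w -> 0 < g (V w)) ->
  \sum_w P w * ln (g (V w) / pr P V (V w)) <= 0.
Proof.
move=> g_ge0 sum_g_le1 g_gt0.
apply: (@le_trans _ _ (\sum_w (P w * (g (V w) / pr P V (V w)) - P w))).
  apply: ler_sum => w _.
  have [->|/P_gt0 Pw_gt0] := eqVneq (P w) 0; first by rewrite !mul0r subr0.
  rewrite -[X in _ - X]mulr1 -mulrBr ler_wpM2l ?P_ge0 //.
  by apply: ln_le_subr1; rewrite divr_gt0 ?g_gt0 ?pr_gt0.
rewrite sumrB P_prob.2 subr_le0 -(sum_pr_mul V (fun a => g a / pr P V a)).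
apply: le_trans sum_g_le1; apply: ler_sum => a _.
have [->|pr_neq0] := eqVneq (pr P V a) 0; first by rewrite mul0r.
by rewrite mulrC divfK.
Qed.

Lemma entropy_submod A B C (X : Omega -> A) (Y : Omega -> B) (Z : Omega -> C) :
  entropy P (fun w => (X w, Y w, Z w)) + entropy P Z <=
  entropy P (fun w => (X w, Z w)) + entropy P (fun w => (Y w, Z w)).
Proof.
set V := fun w => _; set XZ := fun w => _; set YZ := fun w => _.
(* the law of (X, Y, Z) making X and Y conditionally independent given Z *)
pose g (v : A * B * C) := pr P XZ (v.1.1, v.2) * pr P YZ (v.1.2, v.2) / pr P Z v.2.
have g_ge0 v : 0 <= g v by rewrite !mulr_ge0 ?invr_ge0 ?pr_ge0.
have sum_g_le1 : \sum_v g v <= 1.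
  rewrite -(sum_pr Z) -(pair_bigA _ (fun ab c => g (ab, c))) exchange_big.
  apply: ler_sum => c _; rewrite -(pair_bigA _ (fun a b => g (a, b, c))) /=.
  have -> : \sum_a \sum_b g (a, b, c) =
      (\sum_a pr P XZ (a, c)) * (\sum_b pr P YZ (b, c)) / pr P Z c.
    by rewrite big_distrlr mulr_suml; apply: eq_bigr => a _; rewrite mulr_suml.
  rewrite !sum_pr_pair.
  by have [->|pZ_neq0] := eqVneq (pr P Z c) 0; rewrite ?mul0r // mulfK.
have gV_gt0 w : 0 < P w -> 0 < g (V w).
  by move=> Pw_gt0; rewrite !(mulr_gt0, invr_gt0) // pr_gt0.
have := gibbs_ineq g_ge0 sum_g_le1 gV_gt0.
have -> : \sum_w P w * ln (g (V w) / pr P V (V w)) =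
  \sum_w P w * ln (pr P XZ (XZ w)) + \sum_w P w * ln (pr P YZ (YZ w)) -
  \sum_w P w * ln (pr P Z (Z w)) - \sum_w P w * ln (pr P V (V w)).
  rewrite -!big_split -!sumrB /=; apply: eq_bigr => w _.
  have [->|/P_gt0 Pw_gt0] := eqVneq (P w) 0; first by rewrite !mul0r !subr0 addr0.
  rewrite -!mulrDr -!mulrBr; congr (_ * _).
  by rewrite /g !ln_div ?lnM ?posrE ?(mulr_gt0, divr_gt0, invr_gt0) ?pr_gt0.
rewrite !entropyE -!mulrDl ler_pM2r ?invr_gt0 ?ln2_gt0 //; lra.
Qed.

Lemma entropy_subadd A B (X : Omega -> A) (Y : Omega -> B) :
  entropy P (fun w => (X w, Y w)) <= entropy P X + entropy P Y.
Proof.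
have := entropy_submod X Y (fun=> tt); rewrite entropy_cst addr0.
have dropW C (V : Omega -> C) : entropy P (fun w => (V w, tt)) = entropy P V.
  by apply: entropy_eq => w w' => [[]|->].
by rewrite !dropW.
Qed.

Lemma ln_prod (I : finType) (F : I -> R) :
  (forall i, 0 < F i) -> ln (\prod_i F i) = \sum_i ln (F i).
Proof.
move=> F_gt0; suff [] : 0 < \prod_i F i /\ ln (\prod_i F i) = \sum_i ln (F i) by [].
apply: (big_ind2 (fun x y => 0 < x /\ ln x = y)).

- by rewrite ln1 ltr01.
- by move=> x1 x2 y1 y2 [x1_gt0 <-] [x2_gt0 <-]; rewrite mulr_gt0 // lnM.
- by move=> i _; rewrite F_gt0.
Qed.

Lemma entropy_ffun_indep (I T : finType) (X : Omega -> {ffun I -> T}) :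
  (forall x, pr P X x = \prod_i pr P (fun w => X w i) (x i)) ->
  entropy P X = \sum_i entropy P (fun w => X w i).
Proof.
move=> prX; rewrite entropyE; under [RHS]eq_bigr do rewrite entropyE.
rewrite -mulr_suml sumrN exchange_big /=; congr (- _ * _); apply: eq_bigr => w _.
have [->|/P_gt0 Pw_gt0] := eqVneq (P w) 0.
  by rewrite mul0r big1 // => i _; rewrite mul0r.
by rewrite -mulr_sumr prX ln_prod // => i; exact: pr_gt0.
Qed.

Lemma cond_entropy_ge0 A B (X : Omega -> A) (Z : Omega -> B) : 0 <= cond_entropy P X Z.
Proof. by rewrite subr_ge0; apply: le_entropy => w w' []. Qed.

Lemma cond_entropy_cst A (X : Omega -> A) : cond_entropy P X (fun=> tt) = entropy P X.
Proof. by rewrite /cond_entropy entropy_cst subr0; apply: entropy_eq => w w' => [[]|->]. Qed.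

Lemma cond_entropy_le_var A B C (X : Omega -> A) (Y : Omega -> B) (Z : Omega -> C) :
  determines X Y -> cond_entropy P Y Z <= cond_entropy P X Z.
Proof. by move=> XY; rewrite lerD2r; apply: le_entropy => w w' [/XY-> ->]. Qed.

Lemma cond_entropy_le_cond A B C (X : Omega -> A) (Z : Omega -> B) (Z' : Omega -> C) :
  determines Z' Z -> cond_entropy P X Z' <= cond_entropy P X Z.
Proof.
move=> Z'Z; have := entropy_submod X Z' Z.
rewrite (@entropy_eq _ _ (fun w => (X w, Z' w, Z w)) (fun w => (X w, Z' w))); last 2 first.
- by move=> w w' [-> -> _].
- by move=> w w' [-> /[dup] /Z'Z -> ->].
rewrite (@entropy_eq _ _ (fun w => (Z' w, Z w)) Z'); last 2 first.
- by move=> w w' [-> _].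
- by move=> w w' /[dup] /Z'Z -> ->.
rewrite /cond_entropy; lra.
Qed.

Definition subfamily (I T : finType) (X : I -> Omega -> T) (J : {set I}) :
    Omega -> {ffun I -> option T} :=
  fun w => [ffun i => if i \in J then Some (X i w) else None].

Lemma eq_subfamily (I T : finType) (X : I -> Omega -> T) (J : {set I}) w w' :
  subfamily X J w = subfamily X J w' <-> {in J, forall i, X i w = X i w'}.
Proof.
split=> [/ffunP XJ i iJ | XJ]; first by have := XJ i; rewrite !ffunE iJ => -[].
by apply/ffunP => i; rewrite !ffunE; case: ifP => // /XJ->.
Qed.

Lemma cond_entropy_subfamily_le (I T C : finType) (X : I -> Omega -> T)
    (Z : Omega -> C) (J : {set I}) :
  cond_entropy P (subfamily X J) Z <= \sum_(i in J) cond_entropy P (X i) Z.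
Proof.
have [n] := ubnP #|J|; elim: n J => // n IH J; rewrite ltnS => card_J.
have [->|[j jJ]] := set_0Vmem J.
  rewrite big_set0 subr_le0; apply: le_entropy => w w' ->.
  by congr (_, _); apply/eq_subfamily => i; rewrite finset.in_set0.
rewrite (big_setD1 j jJ) /=.
have card_Jj : (#|J :\ j| < n)%N by move: card_J; rewrite (cardsD1 j) jJ.
have := IH _ card_Jj; have := entropy_submod (X j) (subfamily X (J :\ j)) Z.
rewrite /cond_entropy (@entropy_eq _ _ (fun w => (subfamily X J w, Z w))
  (fun w => (X j w, subfamily X (J :\ j) w, Z w))); first lra.
- move=> w w' [/eq_subfamily XJ ->]; rewrite XJ //; congr (_, _, _).
  by apply/eq_subfamily => i /setD1P[_ /XJ].
- move=> w w' [Xj /eq_subfamily XJj ->]; congr (_, _); apply/eq_subfamily => i iJ.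
  by have [->|ij] := eqVneq i j; last by apply: XJj; rewrite in_setD1 ij.
Qed.

Lemma cond_entropy_ffun_le_sum (I T C : finType) (X : Omega -> {ffun I -> T})
    (Z : Omega -> C) :
  cond_entropy P X Z <= \sum_i cond_entropy P (fun w => X w i) Z.
Proof.
have := cond_entropy_subfamily_le (fun i w => X w i) Z [set: I].
under [X in _ <= X -> _]eq_bigl do rewrite finset.in_setT.
apply: le_trans; rewrite lerD2r; apply: le_entropy => w w' [/eq_subfamily XX ->].
by congr (_, _); apply/ffunP => i; apply: XX; rewrite finset.in_setT.
Qed.

Lemma cond_entropy_local_query_le (MT QT QsT AT JT : finType) (W : Omega -> MT)
    (Q : Omega -> QT) (Qs : Omega -> QsT) (As : Omega -> AT) (WJ : Omega -> JT)
    (f : QsT -> MT -> AT) :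
  mutual_info P Q W = 0 -> determines Q Qs -> determines W WJ ->
  (forall w, As w = f (Qs w) (W w)) ->
  cond_entropy P As (fun w => (WJ w, Qs w)) <=
  cond_entropy P As (fun w => (WJ w, Q w)).
Proof.
(* I(As; Q | WJ, Qs) <= I(W; Q | WJ, Qs) = 0: As is a function of (Qs, W), and
   Q, W are independent. *)
move=> QW_indep QQs WWJ AsE.
have := entropy_submod Q W (fun w => (As w, (WJ w, Qs w))).
rewrite (@entropy_eq _ _ (fun w => (Q w, W w, (As w, (WJ w, Qs w)))) (fun w => (Q w, W w)));
  last 2 first.
- by move=> w w' [-> -> _].
- by move=> w w' [/[dup] /QQs QsE -> /[dup] /WWJ WJE WE]; rewrite !AsE QsE WJE WE.
rewrite (@entropy_eq _ _ (fun w => (Q w, (As w, (WJ w, Qs w)))) (fun w => (As w, (WJ w, Q w))));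
  last 2 first.
- by move=> w w' [-> -> -> _].
- by move=> w w' [-> -> /[dup] /QQs -> ->].
rewrite (@entropy_eq _ _ (fun w => (W w, (As w, (WJ w, Qs w)))) (fun w => (W w, Qs w)));
  last 2 first.
- by move=> w w' [-> _ _ ->].
- by move=> w w' [/[dup] /WWJ WJE WE QsE]; rewrite !AsE QsE WJE WE.
have := entropy_submod W Qs WJ.
rewrite (@entropy_eq _ _ (fun w => (W w, Qs w, WJ w)) (fun w => (W w, Qs w))); last 2 first.
- by move=> w w' [-> -> _].
- by move=> w w' [/[dup] /WWJ -> -> ->].
rewrite (@entropy_eq _ _ (fun w => (W w, WJ w)) W); last 2 first.
- by move=> w w' [-> _].
- by move=> w w' /[dup] /WWJ -> ->.
rewrite (@entropy_eq _ _ (fun w => (Qs w, WJ w)) (fun w => (WJ w, Qs w))); last 2 first.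
- by move=> w w' [-> ->].
- by move=> w w' [-> ->].
have := entropy_subadd Q WJ.
rewrite (@entropy_eq _ _ (fun w => (Q w, WJ w)) (fun w => (WJ w, Q w))); last 2 first.
- by move=> w w' [-> ->].
- by move=> w w' [-> ->].
move: QW_indep; rewrite /mutual_info /cond_entropy; lra.
Qed.

End Entropy.

Section Scheme.
Variables (R : realType) (Omega : finType) (P : Omega -> R) (K L S : nat)
  (W : Omega -> {ffun 'I_K -> L.-tuple bool}) (QT AT : finType)
  (Q : 'I_K -> Omega -> {ffun 'I_S -> QT}) (A : 'I_K -> Omega -> {ffun 'I_S -> AT}).
Hypothesis W_ok : messages_ok P W.
Hypothesis QA_scheme : mupir_scheme P W Q A.

Let P_prob : is_prob P := W_ok.1.
Implicit Types (k : 'I_K) (J : {set 'I_K}).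

Definition messages_in (J : {set 'I_K}) := subfamily (fun i w => W w i) J.

Definition cond_answer_entropy k J :=
  cond_entropy P (A k) (fun w => (messages_in J w, Q k w)).

Lemma cond_answer_entropy_ge0 k J : 0 <= cond_answer_entropy k J.
Proof. exact: cond_entropy_ge0. Qed.

Lemma determines_messages_in J : determines W (messages_in J).
Proof. by move=> w w' WE; apply/eq_subfamily => i _; rewrite WE. Qed.

Lemma eq_messages_in_setU1 k J w w' :
  messages_in (k |: J) w = messages_in (k |: J) w' <->
  W w k = W w' k /\ messages_in J w = messages_in J w'.
Proof.
split=> [/eq_subfamily WkJ | [Wk /eq_subfamily WJ]].
  split; first by apply: WkJ; rewrite setU11.
  by apply/eq_subfamily => i iJ; apply: WkJ; rewrite setU1r.
by apply/eq_subfamily => i /setU1P[->|/WJ].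
Qed.

Lemma message_cond_entropy_ge (T : finType) (Z : Omega -> T) k J :
  mutual_info P Z W = 0 -> k \notin J ->
  L%:R <= cond_entropy P (fun w => W w k) (fun w => (messages_in J w, Z w)).
Proof.
move=> ZW_indep kJ.
set Wk := fun w => W w k; set Wnk := messages_in [set~ k].
have cond_le : cond_entropy P Wk (fun w => (Wnk w, Z w)) <=
    cond_entropy P Wk (fun w => (messages_in J w, Z w)).
  apply: cond_entropy_le_cond => // w w' [/eq_subfamily WnkE ->].
  congr (_, _); apply/eq_subfamily => i iJ.
  by apply: WnkE; rewrite in_setC1; apply: contraNneq kJ => <-.
apply: le_trans cond_le.
have Wnk_le : entropy P Wnk <= \sum_(i in [set~ k]) entropy P (fun w => W w i).
  have := cond_entropy_subfamily_le P_prob (fun i w => W w i) (fun=> tt) [set~ k].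
  by rewrite cond_entropy_cst //; under eq_bigr do rewrite cond_entropy_cst //.
have W_sum : entropy P W = L%:R + \sum_(i in [set~ k]) entropy P (fun w => W w i).
  rewrite (entropy_ffun_indep P_prob W_ok.2.2) (bigD1 k) //= W_ok.2.1; congr (_ + _).
  by apply: eq_bigl => i; rewrite in_setC1.
have := entropy_subadd P_prob Wnk Z.
rewrite /cond_entropy (@entropy_eq _ _ P P_prob _ _ (fun w => (Wk w, (Wnk w, Z w)))
  (fun w => (Z w, W w))); last 2 first.
- move=> w w' [WkE /eq_subfamily WnkE ->]; congr (_, _); apply/ffunP => i.
  by have [->|ik] := eqVneq i k; last by apply: WnkE; rewrite in_setC1.
- by move=> w w' [-> WE]; rewrite /Wk /Wnk WE (determines_messages_in _ WE).
move: ZW_indep; rewrite /mutual_info; lra.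
Qed.

Lemma cond_answer_entropy_setU1 k J : k \notin J ->
  L%:R + cond_answer_entropy k (k |: J) <= cond_answer_entropy k J.
Proof.
move=> kJ; set Wk := fun w => W w k.
have := message_cond_entropy_ge (QA_scheme.2.1 k) kJ.
have := QA_scheme.2.2.2 k.
have := entropy_submod P_prob Wk (messages_in J) (fun w => (A k w, Q k w)).
rewrite /cond_answer_entropy /cond_entropy.
rewrite (@entropy_eq _ _ P P_prob _ _ (fun w => (Wk w, messages_in J w, (A k w, Q k w)))
  (fun w => (A k w, (messages_in (k |: J) w, Q k w)))); last 2 first.
- by move=> w w' [WkE WJE -> ->]; congr (_, (_, _)); apply/eq_messages_in_setU1.
- by move=> w w' [-> /eq_messages_in_setU1[WkE ->] ->]; rewrite /Wk WkE.
rewrite (@entropy_eq _ _ P P_prob _ _ (fun w => (messages_in J w, (A k w, Q k w)))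
  (fun w => (A k w, (messages_in J w, Q k w)))); last 2 first.
- by move=> w w' [-> -> ->].
- by move=> w w' [-> -> ->].
rewrite (@entropy_eq _ _ P P_prob _ _ (fun w => (Wk w, (messages_in J w, Q k w)))
  (fun w => (messages_in (k |: J) w, Q k w))); last 2 first.
- by move=> w w' [WkE WJE ->]; congr (_, _); apply/eq_messages_in_setU1.
- by move=> w w' [/eq_messages_in_setU1[WkE ->] ->]; rewrite /Wk WkE.
lra.
Qed.

Lemma source_cond_entropy_private s k k' J :
  cond_entropy P (fun w => A k w s) (fun w => (messages_in J w, Q k w s)) =
  cond_entropy P (fun w => A k' w s) (fun w => (messages_in J w, Q k' w s)).
Proof.
have kk'_same := QA_scheme.2.2.1 s k k'.
pose restrict (m : {ffun 'I_K -> L.-tuple bool}) :=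
  [ffun i => if i \in J then Some (m i) else None].
rewrite /cond_entropy; congr (_ - _).
  exact: (entropy_same_dist (fun t => (t.1.2, (restrict t.2, t.1.1))) kk'_same).
exact: (entropy_same_dist (fun t => (restrict t.2, t.1.1)) kk'_same).
Qed.

Lemma cond_answer_entropy_private k k' J :
  cond_answer_entropy k' J <= S%:R * cond_answer_entropy k J.
Proof.
have [ans ansE] := QA_scheme.1.
have -> : S%:R * cond_answer_entropy k J = \sum_(s < S) cond_answer_entropy k J.
  by rewrite sumr_const card_ord mulr_natl.
apply: le_trans (cond_entropy_ffun_le_sum P_prob (A k') _) _; apply: ler_sum => s _.
set WJ := messages_in J.
have forget_queries :
    cond_entropy P (fun w => A k' w s) (fun w => (WJ w, Q k' w)) <=
    cond_entropy P (fun w => A k' w s) (fun w => (WJ w, Q k' w s)).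
  by apply: cond_entropy_le_cond => // w w' [-> ->].
have local_query :
    cond_entropy P (fun w => A k w s) (fun w => (WJ w, Q k w s)) <=
    cond_entropy P (fun w => A k w s) (fun w => (WJ w, Q k w)).
  apply: (cond_entropy_local_query_le P_prob (QA_scheme.2.1 k)) (fun w => ansE k w s).
  - by move=> w w' ->.
  - exact: determines_messages_in.
have one_source : cond_entropy P (fun w => A k w s) (fun w => (WJ w, Q k w)) <=
    cond_answer_entropy k J.
  by apply: cond_entropy_le_var => // w w' ->.
rewrite (source_cond_entropy_private s k' k) in forget_queries.
exact: le_trans forget_queries (le_trans local_query one_source).
Qed.

Lemma cond_answer_entropy_ge (S_gt0 : (0 < S)%N) n k J :
  #|~: J| = n -> k \notin J ->
  L%:R * \sum_(i < n) (S%:R : R) ^- i <= cond_answer_entropy k J.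
Proof.
elim: n k J => [|n IH] k J card_J kJ.
  by rewrite big_ord0 mulr0 cond_answer_entropy_ge0.
have card_kJ : #|~: (k |: J)| = n.
  move: (cardsC J) (cardsC (k |: J)); rewrite cardsU1 kJ add1n card_J => <- /eqP.
  by rewrite addSnnS eqn_add2l eqSS => /eqP.
have tail : L%:R * \sum_(i < n) (S%:R : R) ^- i.+1 <= cond_answer_entropy k (k |: J).
  have [kJ_full|[k' k'kJ]] := set_0Vmem (~: (k |: J)).
    by rewrite -card_kJ kJ_full cards0 big_ord0 mulr0 cond_answer_entropy_ge0.
  rewrite finset.in_setC in k'kJ.
  under eq_bigr do rewrite exprSr invfM.
  rewrite -mulr_suml mulrA ler_pdivrMr ?ltr0n // [leRHS]mulrC.
  exact: le_trans (IH _ _ card_kJ k'kJ) (cond_answer_entropy_private _ _ _).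
rewrite big_ord_recl expr0 invr1 mulrDr mulr1.
by apply: le_trans (cond_answer_entropy_setU1 kJ); rewrite lerD2l.
Qed.

Lemma cond_answer_entropy0_le_download theta :
  cond_answer_entropy theta finset.set0 <=
  \sum_(s < S) cond_entropy P (fun w => A theta w s) (Q theta).
Proof.
apply: le_trans (cond_entropy_ffun_le_sum P_prob _ _).
by apply: cond_entropy_le_cond => // w w' [_ ->].
Qed.

Lemma mupir_rate_le (S_gt0 : (0 < S)%N) theta :
  mupir_rate P L Q A theta <= (\sum_(i < K) (S%:R : R) ^- i)^-1.
Proof.
have card_all : #|~: (finset.set0 : {set 'I_K})| = K.
  by rewrite finset.setC0 cardsT card_ord.
have := cond_answer_entropy_ge S_gt0 card_all (negbT (finset.in_set0 theta)).
move/le_trans/(_ (cond_answer_entropy0_le_download theta)); rewrite /mupir_rate.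
set D := \sum_(s < S) _; set c := \sum_(i < K) _ => LcD.
have c_gt0 : 0 < c.
  rewrite /c (bigD1 theta) //= ltr_pwDl ?invr_gt0 ?exprn_gt0 ?ltr0n //.
  by apply: sumr_ge0 => i _; rewrite invr_ge0 exprn_ge0.
have [->|D_neq0] := eqVneq D 0; first by rewrite invr0 mulr0 invr_ge0 (ltW c_gt0).
have D_gt0 : 0 < D.
  rewrite lt_def D_neq0 /=; apply: le_trans _ LcD.
  exact: mulr_ge0 (ler0n _ _) (ltW c_gt0).
by rewrite ler_pdivrMr // -(ler_pM2l c_gt0) mulrA mulfV ?gt_eqF // mul1r mulrC.
Qed.

End Scheme.

Lemma download_all_scheme (R : realType) (Omega : finType) (P : Omega -> R)
    (K L S : nat) (W : Omega -> {ffun 'I_K -> L.-tuple bool}) :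
  is_prob P -> (0 < S)%N ->
  mupir_scheme P W (fun _ _ => [ffun _ : 'I_S => tt]) (fun _ w => [ffun _ : 'I_S => W w]).
Proof.
move=> P_prob S_gt0; split; first by exists (fun _ _ m => m) => k w s; rewrite ffunE.
split.
  move=> k; rewrite /mutual_info entropy_cst // add0r; apply/eqP; rewrite subr_eq0.
  by apply/eqP; apply: entropy_eq => // w w' => [->|[->]].
split=> // k; apply/eqP; rewrite subr_eq0; apply/eqP.
apply: entropy_eq => // w w' => [[_ ->] //|[/ffunP/(_ (Ordinal S_gt0))]].
by rewrite !ffunE => ->.
Qed.

Theorem lemma1 (R : realType) (Omega : finType) (P : Omega -> R)
  (N U K L : nat) (W : Omega -> {ffun 'I_K -> L.-tuple bool}) :
  (0 < N)%N -> (0 < U)%N ->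
  messages_ok P W ->
  (* private retrieval is possible *)
  (exists (QT AT : finType)
          (Q : 'I_K -> Omega -> {ffun 'I_(N + U - 1) -> QT})
          (A : 'I_K -> Omega -> {ffun 'I_(N + U - 1) -> AT}),
      mupir_scheme P W Q A) /\
  (* and every private scheme obeys the rate bound *)
  (forall (QT AT : finType)
          (Q : 'I_K -> Omega -> {ffun 'I_(N + U - 1) -> QT})
          (A : 'I_K -> Omega -> {ffun 'I_(N + U - 1) -> AT}),
      mupir_scheme P W Q A ->
      forall theta : 'I_K,
        mupir_rate P L Q A theta <=
        (\sum_(i < K) ((N + U - 1)%:R : R) ^- i)^-1).
Proof.
move=> N_gt0 U_gt0 W_ok; have S_gt0 : (0 < N + U - 1)%N by lia.
split; last by move=> QT AT Q A QA_scheme; exact: mupir_rate_le W_ok QA_scheme S_gt0.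
by exists unit, _, (fun _ _ => [ffun=> tt]), (fun _ w => [ffun=> W w]);
  apply: download_all_scheme W_ok.1 S_gt0.
Qed.
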